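(* Let $\lambda_{\max}>1$ and let $F:[0,\lambda_{\max}]\to\mathbb{R}_+$ be continuously differentiable with $F(0)=0$, such that $F(x)<F^\star$ for all $x\in[0,1)$ and $F'(1)>0$. Suppose $x_1^\star\in(1,\lambda_{\max}]$, $x_2^\star\in[0,1)$, $p^\star\in(0,1)$ are such that the measure $\alpha(\{x_1^\star\})=p^\star$, $\alpha(\{x_2^\star\})=1-p^\star$ is an optimal solution of the problem defining $F^\star$. Then for all $x\in[0,\lambda_{\max}]$, $$F(x)\le\frac{F(x_1^\star)-F(x_2^\star)}{x_1^\star-x_2^\star}\,x+\frac{x_1^\star F(x_2^\star)-x_2^\star F(x_1^\star)}{x_1^\star-x_2^\star}.$$
   Context: $F^\star=\sup\{\mathbb{E}_\alpha[F(X)]:\alpha$ a probability measure on $[0,\lambda_{\max}]$, $X\sim\alpha$, $\mathbb{E}_\alpha[X]\le1\}$. *)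

From HB Require Import structures.
From mathcomp Require Import all_boot all_order all_algebra.
From mathcomp Require Import all_classical all_reals all_analysis.
Set Implicit Arguments. Unset Strict Implicit. Unset Printing Implicit Defensive.
Import Order.TTheory GRing.Theory Num.Theory.
Import numFieldNormedType.Exports.
Local Open Scope classical_set_scope.
Local Open Scope ring_scope.

(* A probability measure alpha on [0, lmax] (represented as a Borel probability
   measure on R concentrated on [0, lmax]) with E_alpha[X] <= 1. *)
Definition I0 (R : realType) (lmax : R) : set R := `[0, lmax]%classic.

Definition feasible (R : realType) (lmax : R) (P : probability R R) : Prop :=
  P (I0 lmax) = 1%E /\
  (\int[P]_(x in I0 lmax) ((x : R)%:E) <= 1%:E)%E.

Definition Fstar (R : realType) (lmax : R) (F : R -> R) : \bar R :=
  ereal_sup [set (\int[P]_(x in I0 lmax) (F x)%:E)%E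
            | P in [set P : probability R R | feasible lmax P]].

From HB Require Import structures.
From mathcomp Require Import all_boot all_order all_algebra.
From mathcomp Require Import all_classical all_reals all_analysis.
From mathcomp Require Import measurable_realfun ring lra.
Import Order.TTheory GRing.Theory Num.Theory.
Import numFieldNormedType.Exports.
Local Open Scope classical_set_scope.
Local Open Scope ring_scope.

(* If the chord through (x2, F x2) and (x1, F x1) passed below F at some x,
   move a small mass t (x1 - x2) onto x, taking t (x - x2) from x1 and
   t (x1 - x) from x2. The mean is unchanged, so the new three-point measure
   is still feasible, while E[F] grows by t times the gap between F x and the
   chord, contradicting the optimality of the two-point measure.
   Only nonnegativity and continuity of F (for its integrability) are needed. *)

Section dirac_mix3.
Context d (T : measurableType d) (R : realType).
Variables (a b c : {nonneg R}) (y1 y2 y3 : T).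
Hypothesis abc1 : a%:num + b%:num + c%:num = 1.

(* The otherwise unused proof argument lets the probability instance below be canonical. *)
Definition dirac_mix3 of a%:num + b%:num + c%:num = 1 : set T -> \bar R :=
  measure_add (measure_add (mscale a \d_y1) (mscale b \d_y2)) (mscale c \d_y3).

HB.instance Definition _ := Measure.on (dirac_mix3 abc1).

Local Open Scope ereal_scope.

Lemma dirac_mix3E A :
  dirac_mix3 abc1 A = a%:num%:E * \d_y1 A + b%:num%:E * \d_y2 A + c%:num%:E * \d_y3 A.
Proof. by rewrite /dirac_mix3 measure_addE; congr (_ + _); exact: measure_addE. Qed.

Lemma dirac_mix3_eq1 (D : set T) : D y1 -> D y2 -> D y3 -> dirac_mix3 abc1 D = 1.
Proof.
by move=> Dy1 Dy2 Dy3; rewrite dirac_mix3E !diracE !mem_set // !mule1 -!EFinD abc1.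
Qed.

Lemma dirac_mix3_setT : dirac_mix3 abc1 setT = 1.
Proof. exact: dirac_mix3_eq1. Qed.

HB.instance Definition _ :=
  @Measure_isProbability.Build _ _ R (dirac_mix3 abc1) dirac_mix3_setT.

Lemma ge0_integral_dirac_mix3 (D : set T) (f : T -> \bar R) :
  measurable D -> measurable_fun D f -> (forall x, D x -> 0 <= f x) ->
  D y1 -> D y2 -> D y3 ->
  \int[dirac_mix3 abc1]_(x in D) f x =
    a%:num%:E * f y1 + b%:num%:E * f y2 + c%:num%:E * f y3.
Proof.
move=> mD mf f0 Dy1 Dy2 Dy3.
rewrite !ge0_integral_measure_add // !ge0_integral_mscale // !integral_dirac //.
by rewrite !diracE !mem_set // !mul1e.
Qed.

End dirac_mix3.

Lemma chord_ge_of_optimal_two_point {R : realFieldType} (F : R -> R) (x1 x2 p x : R) :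
  x2 < x1 -> 0 < p < 1 ->
  (forall a b c, 0 <= a -> 0 <= b -> 0 <= c -> a + b + c = 1 ->
     a * x1 + b * x2 + c * x = p * x1 + (1 - p) * x2 ->
     a * F x1 + b * F x2 + c * F x <= p * F x1 + (1 - p) * F x2) ->
  F x * (x1 - x2) <= (x - x2) * F x1 + (x1 - x) * F x2.
Proof.
move=> x21 /andP[p_gt0 p_lt1] opt.
set s := `|x - x2| + `|x1 - x|.
have le_norm1 := ler_norm (x - x2); have le_norm2 := ler_norm (x1 - x).
have norm1_ge0 := normr_ge0 (x - x2); have norm2_ge0 := normr_ge0 (x1 - x).
have s_gt0 : 0 < s by rewrite /s; lra.
set t := p * (1 - p) / s.
have t_gt0 : 0 < t by rewrite /t divr_gt0 // mulr_gt0 // subr_gt0.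
have ts : t * s = p * (1 - p) by rewrite /t divfK // gt_eqF.
have take1_le : t * (x - x2) <= p * (1 - p) by rewrite -ts ler_pM2l // /s; lra.
have take2_le : t * (x1 - x) <= p * (1 - p) by rewrite -ts ler_pM2l // /s; lra.
have a_ge0 : 0 <= p - t * (x - x2) by nra.
have b_ge0 : 0 <= 1 - p - t * (x1 - x) by nra.
have c_ge0 : 0 <= t * (x1 - x2) by rewrite mulr_ge0 ?subr_ge0 ?ltW.
have := opt _ _ _ a_ge0 b_ge0 c_ge0 ltac:(ring) ltac:(ring).
rewrite (_ : _ + _ + _ = p * F x1 + (1 - p) * F x2 +
  t * (F x * (x1 - x2) - ((x - x2) * F x1 + (x1 - x) * F x2))); last by ring.
by rewrite gerDl pmulr_rle0 // subr_le0.
Qed.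

Lemma dirac_mix3_le_Fstar {R : realType} (lmax : R) (F : R -> R) (a b c y1 y2 y3 : R) :
  (forall x, 0 <= x <= lmax -> 0 <= F x) -> {within `[0, lmax], continuous F} ->
  0 <= a -> 0 <= b -> 0 <= c -> a + b + c = 1 ->
  0 <= y1 <= lmax -> 0 <= y2 <= lmax -> 0 <= y3 <= lmax ->
  a * y1 + b * y2 + c * y3 <= 1 ->
  ((a * F y1 + b * F y2 + c * F y3)%:E <= Fstar lmax F)%E.
Proof.
move=> F_ge0 F_cont a_ge0 b_ge0 c_ge0 abc1 y1_in y2_in y3_in mean_le1.
pose P := @dirac_mix3 _ R R (NngNum a_ge0) (NngNum b_ge0) (NngNum c_ge0) y1 y2 y3 abc1.
have mI : measurable (I0 lmax) by exact: measurable_itv.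
have mF : measurable_fun (I0 lmax) (fun x => (F x)%:E).
  by apply/measurable_EFinP; exact: subspace_continuous_measurable_fun.
have mid : measurable_fun (I0 lmax) (fun x : R => x%:E).
  by apply/measurable_EFinP; exact: measurable_id.
apply: ereal_sup_ubound; exists P; last by rewrite ge0_integral_dirac_mix3.
split; first by rewrite /= dirac_mix3_eq1.
by rewrite ge0_integral_dirac_mix3 // => y; rewrite /I0 /= in_itv => /andP[].
Qed.

Theorem lemmaB1 (R : realType) (lmax : R) (F : R -> R)
  (x1 x2 p : R) :
  1 < lmax ->
  (* F : [0,lmax] -> R_+ continuously differentiable *)
  (forall x, 0 <= x <= lmax -> 0 <= F x) ->
  {within `[0, lmax], continuous F} ->
  (exists F' : R -> R, {within `[0, lmax], continuous F'} /\
     forall x, 0 < x < lmax -> is_derive x 1 F (F' x)) ->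
  F 0 = 0 ->
  (forall x, 0 <= x < 1 -> ((F x)%:E < Fstar lmax F)%E) ->
  0 < derive1 F 1 ->
  1 < x1 <= lmax -> 0 <= x2 < 1 -> 0 < p < 1 ->
  (* the two-point measure p*delta_{x1} + (1-p)*delta_{x2} is optimal:
     it is feasible and attains F^* *)
  p * x1 + (1 - p) * x2 <= 1 ->
  (p * F x1 + (1 - p) * F x2)%:E = Fstar lmax F ->
  forall x, 0 <= x <= lmax ->
    F x <= (F x1 - F x2) / (x1 - x2) * x
           + (x1 * F x2 - x2 * F x1) / (x1 - x2).
Proof.
move=> _ F_ge0 F_cont _ _ _ _ /andP[x1_gt1 x1_le] /andP[x2_ge0 x2_lt1] p01 mean_le1 opt
  x x_in.
have x21 : x2 < x1 by lra.
have x1_in : 0 <= x1 <= lmax by apply/andP; split; lra.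
have x2_in : 0 <= x2 <= lmax by apply/andP; split; lra.
rewrite (_ : _ + _ = ((x - x2) * F x1 + (x1 - x) * F x2) / (x1 - x2)); last first.
  by field; rewrite subr_eq0 gt_eqF.
rewrite ler_pdivlMr ?subr_gt0 //.
apply: (chord_ge_of_optimal_two_point _ _ _ p) => // a b c a_ge0 b_ge0 c_ge0 abc1 mean.
by rewrite -lee_fin opt; apply: dirac_mix3_le_Fstar; rewrite ?mean.
Qed.
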